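(* Let $K$ be a $b$-complete idempotent semiring and $X$ a nonempty set. The kernel theorem holds for a functional $b$-semimodule $V\subset K(X)$ if and only if the identity operator $\mathrm{id}\colon V\to V$ is integral.
   Context: Idempotent semigroup: commutative, associative, idempotent $\oplus$ with order $x\preceq y$ iff $x\oplus y=y$; $b$-complete: every bounded above subset (incl. $\emptyset$) has a least upper bound. A homomorphism of $b$-complete semigroups is a $b$-homomorphism if it preserves least upper bounds of bounded above subsets. Idempotent semiring: idempotent commutative associative $\oplus$, associative $\odot$ bi-distributive, unit $\mathbf 1$, zero $\mathbf 0$; $b$-complete if $b$-complete and $k\odot(\oplus X)=\oplus(k\odot X)$, $(\oplus X)\odot k=\oplus(X\odot k)$ for bounded $X$. Idempotent semimodule over $K$: idempotent semigroup with associative bi-distributive $K$-action, $\mathbf 1\odot x=x$, $\mathbf 0\odot x=\mathbf 0$; $b$-complete if $b$-complete as semigroup and $(\oplus Q)\odot x=\oplus(Q\odot x)$, $k\odot(\oplus X)=\oplus(k\odot X)$ for bounded $Q,X$. Linear: preserves $\oplus$ and scalar multiplication; $b$-linear: moreover a $b$-homomorphism. $K(X)$: all maps $X\to K$, pointwise operations; a functional $b$-semimodule on $X$ is a subset of $K(X)$ closed under pointwise $\oplus$ and scalar multiplication, which is a $b$-complete semimodule and whose embedding into $K(X)$ is a $b$-homomorphism. A mapping $A\colon V\to W$ is integral if there is $k\colon X\to W$ such that $\{f(x)\odot k(x)\mid x\in X\}$ is bounded for all $f\in V$ and $Af=\sup_{x\in X}(f(x)\odot k(x))$. The kernel theorem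 holds for $V$ if every $b$-linear mapping from $V$ to an arbitrary $b$-complete semimodule over $K$ is integral. *)

Set Implicit Arguments.

Section Order.
Variable T : Type.
Variable add : T -> T -> T.

Definition le (x y : T) : Prop := add x y = y.

Definition upper_bound_in (P S : T -> Prop) (u : T) : Prop :=
  P u /\ forall x, S x -> le x u.
Definition bounded_in (P S : T -> Prop) : Prop := exists u, upper_bound_in P S u.
Definition lub_in (P S : T -> Prop) (s : T) : Prop :=
  upper_bound_in P S s /\ forall u, upper_bound_in P S u -> le s u.

Definition all_T : T -> Prop := fun _ => True.
Definition bounded (S : T -> Prop) : Prop := bounded_in all_T S.
Definition is_lub (S : T -> Prop) (s : T) : Prop := lub_in all_T S s.

Definition b_complete : Prop :=
  forall S : T -> Prop, bounded S -> exists s, is_lub S s.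
End Order.

Definition image {A B : Type} (f : A -> B) (S : A -> Prop) : B -> Prop :=
  fun y => exists x, S x /\ y = f x.

Record IdemSemiring := {
  sr_car :> Type;
  sr_add : sr_car -> sr_car -> sr_car;
  sr_mul : sr_car -> sr_car -> sr_car;
  sr_one : sr_car;
  sr_zero : sr_car;
  sr_addA : forall a b c, sr_add a (sr_add b c) = sr_add (sr_add a b) c;
  sr_addC : forall a b, sr_add a b = sr_add b a;
  sr_addI : forall a, sr_add a a = a;
  sr_add0 : forall a, sr_add sr_zero a = a;
  sr_mulA : forall a b c, sr_mul a (sr_mul b c) = sr_mul (sr_mul a b) c;
  sr_mul1l : forall a, sr_mul sr_one a = a;
  sr_mul1r : forall a, sr_mul a sr_one = a;
  sr_mulDl : forall a b c, sr_mul (sr_add a b) c = sr_add (sr_mul a c) (sr_mul b c);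
  sr_mulDr : forall a b c, sr_mul a (sr_add b c) = sr_add (sr_mul a b) (sr_mul a c);
  sr_mul0l : forall a, sr_mul sr_zero a = sr_zero;
  sr_mul0r : forall a, sr_mul a sr_zero = sr_zero
}.

Definition b_complete_semiring (K : IdemSemiring) : Prop :=
  b_complete (sr_add K) /\
  (forall (k : K) (S : K -> Prop) (s : K),
      bounded (sr_add K) S -> is_lub (sr_add K) S s ->
      is_lub (sr_add K) (image (sr_mul K k) S) (sr_mul K k s) /\
      is_lub (sr_add K) (image (fun x => sr_mul K x k) S) (sr_mul K s k)).

Record Semimodule (K : IdemSemiring) := {
  sm_car :> Type;
  sm_add : sm_car -> sm_car -> sm_car;
  sm_zero : sm_car;
  sm_act : K -> sm_car -> sm_car;
  sm_addA : forall x y z, sm_add x (sm_add y z) = sm_add (sm_add x y) z;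
  sm_addC : forall x y, sm_add x y = sm_add y x;
  sm_addI : forall x, sm_add x x = x;
  sm_add0 : forall x, sm_add sm_zero x = x;
  sm_actA : forall a b x, sm_act (sr_mul K a b) x = sm_act a (sm_act b x);
  sm_actDl : forall a b x, sm_act (sr_add K a b) x = sm_add (sm_act a x) (sm_act b x);
  sm_actDr : forall a x y, sm_act a (sm_add x y) = sm_add (sm_act a x) (sm_act a y);
  sm_act1 : forall x, sm_act (sr_one K) x = x;
  sm_act0 : forall x, sm_act (sr_zero K) x = sm_zero
}.

Definition b_complete_semimodule (K : IdemSemiring) (W : Semimodule K) : Prop :=
  b_complete (sm_add W) /\
  (forall (Q : K -> Prop) (q : K) (x : W),
      bounded (sr_add K) Q -> is_lub (sr_add K) Q q ->
      is_lub (sm_add W) (image (fun k => sm_act W k x) Q) (sm_act W q x)) /\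
  (forall (k : K) (S : W -> Prop) (s : W),
      bounded (sm_add W) S -> is_lub (sm_add W) S s ->
      is_lub (sm_add W) (image (sm_act W k) S) (sm_act W k s)).

Section Functional.
Variable K : IdemSemiring.
Variable X : Type.

Definition padd (f g : X -> K) : X -> K := fun x => sr_add K (f x) (g x).
Definition pact (k : K) (f : X -> K) : X -> K := fun x => sr_mul K k (f x).
Definition pzero : X -> K := fun _ => sr_zero K.

Definition subset_of (S V : (X -> K) -> Prop) : Prop := forall f, S f -> V f.

(* V ⊂ K(X) is a functional b-semimodule: closed under pointwise ⊕ and scalar
   multiplication (and containing the zero function), a b-complete semimodule
   with the induced operations (sups and bounds taken inside V), and the
   embedding V -> K(X) is a b-homomorphism (sups in V of bounded subsets are
   sups in K(X)). *)
Definition functional_bsemimodule (V : (X -> K) -> Prop) : Prop :=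
  (forall f g, V f -> V g -> V (padd f g)) /\
  (forall k f, V f -> V (pact k f)) /\
  V pzero /\
  (forall S, subset_of S V -> bounded_in padd V S -> exists s, lub_in padd V S s) /\
  (forall (Q : K -> Prop) (q : K) f, V f ->
      bounded (sr_add K) Q -> is_lub (sr_add K) Q q ->
      lub_in padd V (image (fun k => pact k f) Q) (pact q f)) /\
  (forall k S s, subset_of S V -> bounded_in padd V S -> lub_in padd V S s ->
      lub_in padd V (image (pact k) S) (pact k s)) /\
  (forall S s, subset_of S V -> bounded_in padd V S -> lub_in padd V S s ->
      is_lub padd S s).

(* b-linear maps V -> W (a map is given on all of K(X); only its values on V
   matter). *)
Arguments b_complete_semimodule : clear implicits.
Definition b_linear (V : (X -> K) -> Prop) (W : Semimodule K) (A : (X -> K) -> W)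
  : Prop :=
  (forall f g, V f -> V g -> A (padd f g) = sm_add W (A f) (A g)) /\
  (forall k f, V f -> A (pact k f) = sm_act W k (A f)) /\
  (forall S s, subset_of S V -> bounded_in padd V S -> lub_in padd V S s ->
      is_lub (sm_add W) (image A S) (A s)).

(* Integrality of A : V -> W, where the target W is given as a subset inW of an
   ambient type with addition addW and scalar action actW (bounds and sups are
   taken inside inW). *)
Definition integral_in {W : Type} (inW : W -> Prop) (addW : W -> W -> W)
  (actW : K -> W -> W) (V : (X -> K) -> Prop) (A : (X -> K) -> W) : Prop :=
  exists k : X -> W, (forall x, inW (k x)) /\
    forall f, V f ->
      let T := fun w => exists x, w = actW (f x) (k x) in
      bounded_in addW inW T /\ lub_in addW inW T (A f).

Arguments b_linear : clear implicits.
Definition integral (V : (X -> K) -> Prop) (W : Semimodule K) (A : (X -> K) -> W)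
  : Prop := integral_in (all_T (T:=W)) (sm_add W) (sm_act W) V A.

Arguments integral : clear implicits.
Definition kernel_theorem_holds (V : (X -> K) -> Prop) : Prop :=
  forall (W : Semimodule K), b_complete_semimodule K W ->
    forall A : (X -> K) -> W, b_linear V W A -> integral V W A.

End Functional.

(* If the identity of V is integral with kernel k, then every f in V is the
   supremum in V of the bounded family f(x) k(x); a b-linear A preserves this
   supremum and the action, so A f = sup_x f(x) A(k x), i.e. A is integral
   with kernel A o k.  Conversely, V is itself a b-complete semimodule and the
   identity of V is b-linear, so the kernel theorem applies to it. *)

From Stdlib Require Import ClassicalEpsilon FunctionalExtensionality
  PropExtensionality ProofIrrelevance.
Set Implicit Arguments.

Lemma set_ext (T : Type) (S1 S2 : T -> Prop) :
  (forall t, S1 t <-> S2 t) -> S1 = S2.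
Proof. intros E; extensionality t; apply propositional_extensionality, E. Qed.

Lemma lub_in_mem (T : Type) (add : T -> T -> T) (P S : T -> Prop) (s : T) :
  lub_in add P S s -> P s.
Proof. intros [[Ps _] _]; exact Ps. Qed.

Section SubSemimodule.
Variables (K : IdemSemiring) (X : Type) (V : (X -> K) -> Prop).
Hypothesis HV : functional_bsemimodule K V.

Lemma V_padd f g : V f -> V g -> V (padd K f g).
Proof. exact (proj1 HV f g). Qed.

Lemma V_pact k f : V f -> V (pact K k f).
Proof. exact (proj1 (proj2 HV) k f). Qed.

Lemma V_pzero : V (@pzero K X).
Proof. exact (proj1 (proj2 (proj2 HV))). Qed.

Definition vsub := {f : X -> K | V f}.
Definition vval (a : vsub) : X -> K := proj1_sig a.

Definition vadd (a b : vsub) : vsub :=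
  exist _ (padd K (vval a) (vval b)) (V_padd (proj2_sig a) (proj2_sig b)).
Definition vact (k : K) (a : vsub) : vsub :=
  exist _ (pact K k (vval a)) (V_pact k (proj2_sig a)).
Definition vzero : vsub := exist _ (@pzero K X) V_pzero.

Lemma vval_inj (a b : vsub) : vval a = vval b -> a = b.
Proof.
  destruct a as [f Hf], b as [g Hg]; simpl; intros <-.
  f_equal; apply proof_irrelevance.
Qed.

Ltac vsub_pointwise :=
  intros; apply vval_inj; extensionality t; unfold padd, pact, pzero; simpl.

Definition vsemimodule : Semimodule K.
Proof.
  refine (@Build_Semimodule K vsub vadd vzero vact _ _ _ _ _ _ _ _ _);
    vsub_pointwise.
  - apply sr_addA.
  - apply sr_addC.
  - apply sr_addI.
  - apply sr_add0.
  - symmetry; apply sr_mulA.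
  - apply sr_mulDl.
  - apply sr_mulDr.
  - apply sr_mul1l.
  - apply sr_mul0l.
Defined.

Lemma le_vsub (a b : vsub) : le vadd a b <-> le (@padd K X) (vval a) (vval b).
Proof.
  unfold le; split; intro E.
  - exact (f_equal vval E).
  - exact (vval_inj (vadd a b) b E).
Qed.

Lemma upper_bound_vsub (S : vsub -> Prop) (u : vsub) :
  upper_bound_in vadd (all_T (T:=vsub)) S u <->
  upper_bound_in (@padd K X) V (image vval S) (vval u).
Proof.
  split.
  - intros [_ Hu]; split; [exact (proj2_sig u)|].
    intros f [a [Sa ->]]; apply le_vsub, Hu, Sa.
  - intros [_ Hu]; split; [exact I|].
    intros a Sa; apply le_vsub, Hu; exists a; auto.
Qed.

Lemma bounded_vsub (S : vsub -> Prop) :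
  bounded_in vadd (all_T (T:=vsub)) S <-> bounded_in (@padd K X) V (image vval S).
Proof.
  split.
  - intros [u Hu]; exists (vval u); apply upper_bound_vsub, Hu.
  - intros [u Hu]; exists (exist _ u (proj1 Hu)); apply upper_bound_vsub, Hu.
Qed.

Lemma lub_vsub (S : vsub -> Prop) (s : vsub) :
  lub_in vadd (all_T (T:=vsub)) S s <-> lub_in (@padd K X) V (image vval S) (vval s).
Proof.
  split.
  - intros [Hs Hleast]; split; [apply upper_bound_vsub, Hs|].
    intros u Hu; apply (le_vsub s (exist _ u (proj1 Hu))).
    apply Hleast, upper_bound_vsub, Hu.
  - intros [Hs Hleast]; split; [apply upper_bound_vsub, Hs|].
    intros u Hu; apply le_vsub, Hleast, upper_bound_vsub, Hu.
Qed.

Lemma image_vval_subset (S : vsub -> Prop) : subset_of K (image vval S) V.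
Proof. intros f [a [_ ->]]; exact (proj2_sig a). Qed.

Lemma vsemimodule_b_complete : b_complete_semimodule vsemimodule.
Proof.
  destruct HV as (_ & _ & _ & Hcomplete & Hlub_scalars & Hlub_act & _).
  split; [|split]; simpl.
  - intros S HS; apply bounded_vsub in HS.
    destruct (Hcomplete _ (image_vval_subset (S:=S)) HS) as [s Hs].
    exists (exist _ s (lub_in_mem Hs)); apply lub_vsub, Hs.
  - intros Q q a HQ Hq; apply lub_vsub.
    replace (image vval _) with (image (fun k => pact K k (vval a)) Q).
    + exact (Hlub_scalars Q q _ (proj2_sig a) HQ Hq).
    + apply set_ext; intro f; split.
      * intros [k [Qk ->]]; exists (vact k a); split; [exists k|]; auto.
      * intros [b [[k [Qk ->]] ->]]; exists k; auto.
  - intros k S s HS Hs; apply bounded_vsub in HS; apply lub_vsub in Hs.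
    apply lub_vsub.
    replace (image vval _) with (image (pact K k) (image vval S)).
    + exact (Hlub_act k _ _ (image_vval_subset (S:=S)) HS Hs).
    + apply set_ext; intro f; split.
      * intros [g [[a [Sa ->]] ->]]; exists (vact k a); split; [exists a|]; auto.
      * intros [b [[a [Sa ->]] ->]]; exists (vval a); split; [exists a|]; auto.
Qed.

(* The identity of V, extended by zero outside V. *)
Definition vincl (f : X -> K) : vsub :=
  match excluded_middle_informative (V f) with
  | left Vf => exist _ f Vf
  | right _ => vzero
  end.

Lemma vval_vincl f : V f -> vval (vincl f) = f.
Proof. intros Vf; unfold vincl; destruct excluded_middle_informative; easy. Qed.

Lemma image_vval_vincl (S : (X -> K) -> Prop) :
  subset_of K S V -> image vval (image vincl S) = S.
Proof.
  intros SV; apply set_ext; intro f; split.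
  - intros [a [[g [Sg ->]] ->]]; rewrite vval_vincl; auto.
  - intros Sf; exists (vincl f); split; [exists f; auto|].
    symmetry; apply vval_vincl; auto.
Qed.

Lemma vincl_b_linear : b_linear V vsemimodule vincl.
Proof.
  split; [|split].
  - intros f g Vf Vg; apply vval_inj; simpl.
    rewrite !vval_vincl; auto using V_padd.
  - intros k f Vf; apply vval_inj; simpl.
    rewrite !vval_vincl; auto using V_pact.
  - intros S s SV _ Hs; simpl; apply lub_vsub.
    rewrite image_vval_vincl, vval_vincl; [exact Hs | exact (lub_in_mem Hs) | exact SV].
Qed.

Lemma integral_id_of_integral_vincl :
  integral V vsemimodule vincl -> integral_in K V (@padd K X) (@pact K X) V (fun f => f).
Proof.
  intros [k [_ Hk]].
  exists (fun x => vval (k x)); split; [intro x; exact (proj2_sig (k x))|].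
  intros f Vf; destruct (Hk f Vf) as [Hbounded Hlub]; simpl in Hbounded, Hlub.
  apply bounded_vsub in Hbounded; apply lub_vsub in Hlub.
  rewrite vval_vincl in Hlub by exact Vf.
  replace (fun g => exists x, g = pact K (f x) (vval (k x)))
    with (image vval (fun a => exists x, a = vact (f x) (k x))); [split; auto|].
  apply set_ext; intro g; split.
  - intros [a [[x ->] ->]]; exists x; reflexivity.
  - intros [x ->]; exists (vact (f x) (k x)); split; [exists x|]; reflexivity.
Qed.

End SubSemimodule.

Lemma integral_id_of_kernel_theorem (K : IdemSemiring) (X : Type)
  (V : (X -> K) -> Prop) :
  functional_bsemimodule K V -> kernel_theorem_holds K V ->
  integral_in K V (@padd K X) (@pact K X) V (fun f => f).
Proof.
  intros HV Hker; apply (integral_id_of_integral_vincl (HV:=HV)).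
  apply Hker; [apply vsemimodule_b_complete | apply vincl_b_linear].
Qed.

Lemma kernel_theorem_of_integral_id (K : IdemSemiring) (X : Type)
  (V : (X -> K) -> Prop) :
  (forall k f, V f -> V (pact K k f)) ->
  integral_in K V (@padd K X) (@pact K X) V (fun f => f) -> kernel_theorem_holds K V.
Proof.
  intros V_pact [k [Vk Hk]] W _ A [_ [A_act A_lub]].
  exists (fun x => A (k x)); split; [intro; exact I|].
  intros f Vf; destruct (Hk f Vf) as [Hbounded Hlub]; simpl in Hbounded, Hlub.
  set (T := fun g => exists x, g = pact K (f x) (k x)) in *.
  assert (TV : subset_of K T V) by (intros g [x ->]; auto).
  replace (fun w => exists x, w = sm_act W (f x) (A (k x))) with (image A T).
  - pose proof (A_lub T f TV Hbounded Hlub) as HA.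
    split; [exists (A f); split; [exact I | apply HA]|]; exact HA.
  - apply set_ext; intro w; split.
    + intros [g [[x ->] ->]]; exists x; apply A_act, Vk.
    + intros [x ->]; exists (pact K (f x) (k x)); split; [exists x; reflexivity|].
      symmetry; apply A_act, Vk.
Qed.

Theorem corollary7p30 (K : IdemSemiring) (HK : b_complete_semiring K)
  (X : Type) (HX : inhabited X) (V : (X -> K) -> Prop)
  (HV : @functional_bsemimodule K X V) :
  @kernel_theorem_holds K X V <->
  @integral_in K X (X -> K) V (@padd K X) (@pact K X) V (fun f : X -> K => f).
Proof.
  split.
  - exact (integral_id_of_kernel_theorem HV).
  - exact (kernel_theorem_of_integral_id (V_pact HV)).
Qed.
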